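(* For every graph $G$ and every path $P$, $\pi^*(G\boxtimes P)\le 4\,\pi^*(G)$.
   Context: All graphs are finite and simple. A lazy walk in a graph $G$ is a sequence of vertices $v_1,\dots,v_m$ such that for each $i<m$, either $v_iv_{i+1}\in E(G)$ or $v_i=v_{i+1}$. For a colouring $\phi$ of $V(G)$, a lazy walk $v_1,\dots,v_{2t}$ is $\phi$-repetitive if $\phi(v_i)=\phi(v_{i+t})$ for each $i\in\{1,\dots,t\}$. A colouring $\phi$ is strongly nonrepetitive if for every $\phi$-repetitive lazy walk $v_1,\dots,v_{2t}$ there exists $i\in\{1,\dots,t\}$ with $v_i=v_{i+t}$. $\pi^*(G)$ denotes the minimum number of colours in a strongly nonrepetitive colouring of $G$. The strong product $A\boxtimes B$ has vertex set $V(A)\times V(B)$, with distinct $(v,x),(w,y)$ adjacent iff ($v=w$ and $xy\in E(B)$) or ($x=y$ and $vw\in E(A)$) or ($vw\in E(A)$ and $xy\in E(B)$). *)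

From mathcomp Require Import all_boot.
Set Implicit Arguments. Unset Strict Implicit. Unset Printing Implicit Defensive.

Definition simple_graph (T : finType) (e : rel T) : Prop :=
  symmetric e /\ irreflexive e.

Definition lazy_adj (T : finType) (e : rel T) : rel T :=
  fun x y => (x == y) || e x y.

(* A lazy walk v_0, ..., v_{m-1} given as a function w : nat -> T
   (only the first m values matter). *)
Definition lazy_walk (T : finType) (e : rel T) (w : nat -> T) (m : nat) : Prop :=
  forall i, i.+1 < m -> lazy_adj e (w i) (w i.+1).

Definition strongly_nonrepetitive (T : finType) (e : rel T) (C : Type)
    (phi : T -> C) : Prop :=
  forall (w : nat -> T) (t : nat), 0 < t -> lazy_walk e w (t + t) ->
    (forall i, i < t -> phi (w i) = phi (w (i + t))) ->
    exists2 i, i < t & w i = w (i + t).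

Definition sn_colourable (T : finType) (e : rel T) (k : nat) : Prop :=
  exists phi : T -> 'I_k, strongly_nonrepetitive e phi.

Definition is_pi_star (T : finType) (e : rel T) (k : nat) : Prop :=
  sn_colourable e k /\ forall j, sn_colourable e j -> k <= j.

Definition strong_prod (A B : finType) (eA : rel A) (eB : rel B) : rel (A * B) :=
  fun u v => (u != v) && ((u.1 == v.1) || eA u.1 v.1)
                      && ((u.2 == v.2) || eB u.2 v.2).

Definition path_graph (n : nat) : rel 'I_n :=
  fun i j => (i.+1 == j :> nat) || (j.+1 == i :> nat).
Arguments path_graph : clear implicits.

From mathcomp Require Import all_boot zify.
Set Implicit Arguments. Unset Strict Implicit. Unset Printing Implicit Defensive.

(* Colour (v, p) by (phi v, psi p), where psi is a 4-colouring of the path: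
   0 on multiples of 3 and Thue's square-free ternary word on the remaining
   positions.  Then equal psi-colours lie at distance 0 or at least 3, and psi
   has no square.  These two facts force every psi-repetitive lazy walk
   x_0 ... x_(2t-1) on the path to repeat itself exactly.  The gap
   x_(j+t) - x_j changes by at most 2 per step, so it never changes sign.  The
   two halves stand still together or move together, and they move either in
   parallel throughout or in mirror image throughout.  A positive gap d in the
   parallel case makes psi repeat with period d on an interval of length d;
   in the mirror case the walk cannot get from x_(t-1) to x_t; a negative gap
   becomes positive when the walk is reversed.  So a repetitive lazy walk in
   G x P projects to a phi-repetitive lazy walk in G, whose halves meet at
   some i, and there the path coordinates agree as well. *)

Fixpoint thue_morse_fuel (fuel n : nat) : bool :=
  if fuel is f.+1 then odd n (+) thue_morse_fuel f n./2 else false.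

Lemma thue_morse_fuel0 f : thue_morse_fuel f 0 = false.
Proof. by elim: f. Qed.

Lemma thue_morse_fuel_enough f g n :
  n <= f -> n <= g -> thue_morse_fuel f n = thue_morse_fuel g n.
Proof.
case: n => [|n]; first by rewrite !thue_morse_fuel0.
elim: f g n => [|f IH] [|g] n //= nf ng; congr addb.
have : uphalf n <= n by lia.
case: (uphalf n) => [|m] half_le; first by rewrite !thue_morse_fuel0.
by apply: IH; lia.
Qed.

Definition thue_morse n := thue_morse_fuel n n.

Lemma thue_morseE n : thue_morse n = odd n (+) thue_morse n./2.
Proof.
case: n => [//|n]; rewrite /thue_morse /=; congr addb.
by apply: thue_morse_fuel_enough; lia.
Qed.

Lemma thue_morse_bit (b : bool) k : thue_morse (b + 2 * k) = b (+) thue_morse k.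
Proof.
rewrite thue_morseE; congr (_ (+) thue_morse _); case: b => /=; lia.
Qed.

Lemma thue_morse_succ_even k : ~~ odd k -> thue_morse k.+1 = ~~ thue_morse k.
Proof.
move=> ev; have E : k = false + 2 * k./2 by lia.
by rewrite {2}E thue_morse_bit (_ : k.+1 = true + 2 * k./2) ?thue_morse_bit //; lia.
Qed.

Lemma alternating_parity (f : nat -> bool) i L :
  (forall r, r < L -> f (i + r).+1 = ~~ f (i + r)) -> f (i + L) = f i (+) odd L.
Proof.
elim: L => [|L IH] alt; first by rewrite addn0 addbF.
by rewrite addnS alt // IH => [|r rL]; [rewrite /= addbN | apply: alt; lia].
Qed.

Theorem thue_morse_overlap_free L i : 0 < L ->
  ~ (forall k, k <= L -> thue_morse (i + k) = thue_morse (i + k + L)).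
Proof.
elim/ltn_ind: L i => L IH i L_gt0 ovl.
case: (boolP (odd L)) => [oddL | evenL].
  (* Each step inside the window flips the bit: it is an aligned pair (2k, 2k+1)
     or its translate by the odd L is. *)
  have alt r : r < L -> thue_morse (i + r).+1 = ~~ thue_morse (i + r).
    move=> rL; case: (boolP (odd (i + r))) => [oddr | evenr]; last exact: thue_morse_succ_even.
    rewrite -addnS (ovl r.+1 rL) (ovl r (ltnW rL)) addnS addSn.
    by apply: thue_morse_succ_even; lia.
  by move: (alternating_parity alt) (ovl 0 (leq0n L)); rewrite !addn0 oddL => ->; case: thue_morse.
apply: (IH L./2 _ i./2); [lia | lia | move=> k kL].
have := ovl (2 * k) ltac:(lia).
rewrite (_ : i + 2 * k = odd i + 2 * (i./2 + k)); last by lia.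
rewrite (_ : odd i + 2 * (i./2 + k) + L = odd i + 2 * (i./2 + k + L./2)); last by lia.
by rewrite !thue_morse_bit => /addbI.
Qed.

(* Thue's square-free word 2102012..., read off the differences of Thue-Morse. *)
Definition ternary_thue_morse n : nat := (thue_morse n.+1).+1 - thue_morse n.

Lemma ternary_thue_morse_lt3 n : ternary_thue_morse n < 3.
Proof. by rewrite /ternary_thue_morse; case: thue_morse; case: thue_morse. Qed.

Theorem ternary_thue_morse_squarefree L i : 0 < L ->
  ~ (forall k, k < L -> ternary_thue_morse (i + k) = ternary_thue_morse (i + k + L)).
Proof.
rewrite /ternary_thue_morse => L_gt0 sq.
have shift_xor k : k <= L ->
    thue_morse (i + k) (+) thue_morse (i + k + L) = thue_morse i (+) thue_morse (i + L).
  elim: k => [|k IH] kL; first by rewrite addn0.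
  rewrite -IH 1?ltnW //; move: (sq k kL); rewrite !addnS !addSn.
  by case: (thue_morse (i + k)) (thue_morse (i + k).+1)
           (thue_morse (i + k + L)) (thue_morse (i + k + L).+1) => [] [] [] [].
case: (boolP (thue_morse i (+) thue_morse (i + L))) => [compl | /negPf same].
  have flat k : k <= L -> thue_morse (i + k) = thue_morse i.
    elim: k => [|k IH] kL; first by rewrite addn0.
    move: (sq k kL) (shift_xor k (ltnW kL)) (shift_xor k.+1 kL) compl.
    rewrite -(IH (ltnW kL)) !addnS !addSn.
    by case: (thue_morse (i + k)) (thue_morse (i + k).+1)
             (thue_morse (i + k + L)) (thue_morse (i + k + L).+1) (thue_morse (i + L))
             => [] [] [] [] [].
  by move: compl; rewrite flat // addbb.
apply: (thue_morse_overlap_free L_gt0 (i := i)) => k kL.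
by move: (shift_xor k kL); rewrite same; do 2!case: thue_morse.
Qed.

(* Positions 3q + 1 and 3q + 2 carry the letters 2q and 2q + 1, shifted to 1..3. *)
Definition path_colour p : nat :=
  if p %% 3 == 0 then 0 else (ternary_thue_morse (2 * (p %/ 3) + p %% 3 - 1)).+1.

Lemma path_colour_lt4 p : path_colour p < 4.
Proof. by rewrite /path_colour; case: eqP => // _; apply: ternary_thue_morse_lt3. Qed.

Lemma path_colour_far a b :
  path_colour a = path_colour b -> a = b \/ a + 3 <= b \/ b + 3 <= a.
Proof.
suff near_neq p q : p < q < p + 3 -> path_colour p <> path_colour q.
  by move=> eq_ab; case: (ltngtP a b) => ab; try lia;
     [have := @near_neq a b | have := @near_neq b a]; rewrite eq_ab; lia.
move=> pq; rewrite /path_colour.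
case: eqP => p3; case: eqP => q3 //; first lia.
move=> [eq_t]; apply: (@ternary_thue_morse_squarefree 1 (2 * (p %/ 3) + p %% 3 - 1)) => // k.
rewrite ltnS leqn0 => /eqP ->; rewrite addn0 addn1 eq_t; congr ternary_thue_morse; lia.
Qed.

Theorem path_colour_squarefree L i : 0 < L ->
  ~ (forall k, k < L -> path_colour (i + k) = path_colour (i + k + L)).
Proof.
move=> L_gt0 sq.
case: (ltnP L 3) => [L_lt3 | L_ge3].
  by have := path_colour_far (sq 0 L_gt0); rewrite !addn0; lia.
have L3 : L %% 3 = 0.
  pose k0 := (3 - i %% 3) %% 3.
  have := sq k0 ltac:(rewrite /k0; lia); rewrite /path_colour.
  by rewrite (_ : (i + k0) %% 3 == 0); [case: eqP => //; lia | apply/eqP; rewrite /k0; lia].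
pose s := 2 * (i %/ 3) + (i %% 3) %/ 2.
apply: (@ternary_thue_morse_squarefree (2 * (L %/ 3)) s); first lia.
move=> r rL.
pose p := 3 * ((s + r) %/ 2) + (s + r) %% 2 + 1.
have ip : i <= p by rewrite /p /s; lia.
have pL : p < i + L by rewrite /p /s; lia.
have := sq (p - i) ltac:(lia); rewrite (_ : i + (p - i) = p); last by lia.
rewrite /path_colour (_ : (p %% 3 == 0) = false); last by apply/eqP; rewrite /p; lia.
rewrite (_ : ((p + L) %% 3 == 0) = false); last by apply/eqP; rewrite /p; lia.
have idx_p : 2 * (p %/ 3) + p %% 3 - 1 = s + r by rewrite /p; lia.
have idx_pL : 2 * ((p + L) %/ 3) + (p + L) %% 3 - 1 = s + r + 2 * (L %/ 3) by rewrite /p; lia.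
by rewrite idx_p idx_pL => -[].
Qed.

Lemma path_colour_pairs_far p q p' q' :
  path_colour p = path_colour q -> path_colour p' = path_colour q' ->
  p = p' -> q = q' \/ q + 3 <= q' \/ q' + 3 <= q.
Proof. by move=> pq pq' pp'; apply: path_colour_far; rewrite -pq -pq' pp'. Qed.

Definition nat_lazy_step (a b : nat) : Prop := a <= b.+1 /\ b <= a.+1.

Lemma lazy_walk_attains (f : nat -> nat) m v :
  (forall j, j < m -> f j.+1 <= (f j).+1) -> f 0 <= v <= f m ->
  exists2 j, j <= m & f j = v.
Proof.
elim: m => [|m IH] step v_range; first by exists 0 => //; lia.
case: (leqP v (f m)) => [v_le | v_gt].
  by have [j jm fj] := IH (fun j jm => step j (ltnW jm)) ltac:(lia); exists j => //; lia.
by exists m.+1 => //; have := step m (ltnSn m); lia.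
Qed.

Lemma forall_leqS (P : nat -> Prop) m :
  (forall j, j <= m -> P j) -> P m.+1 -> forall j, j <= m.+1 -> P j.
Proof. by move=> Pm Pm1 j; rewrite leq_eqVlt => /orP [/eqP -> | /Pm]. Qed.

Section RepetitiveWalk.

Variables (x : nat -> nat) (t : nat).
Hypothesis x_lazy : forall j, j.+1 < t + t -> nat_lazy_step (x j) (x j.+1).
Hypothesis x_rep : forall j, j < t -> path_colour (x j) = path_colour (x (j + t)).

Local Notation y j := (x (j + t)).

Lemma second_half_lazy j : j.+1 < t -> nat_lazy_step (y j) (y j.+1).
Proof. by move=> jt; rewrite addSn; apply: x_lazy; lia. Qed.

Lemma gap_sign j : j < t ->
  (x 0 = y 0 -> x j = y j) /\ (x 0 < y 0 -> x j + 3 <= y j) /\ (y 0 < x 0 -> y j + 3 <= x j).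
Proof.
elim: j => [|j IH] jt; first by have := path_colour_far (x_rep jt); lia.
have := path_colour_far (x_rep jt); have := IH (ltnW jt).
have [] := x_lazy (j:=j) ltac:(lia); have [] := second_half_lazy jt; lia.
Qed.

Lemma stay_sync j : j.+1 < t -> x j.+1 = x j <-> y j.+1 = y j.
Proof.
move=> jt; have := path_colour_pairs_far (x_rep (ltnW jt)) (x_rep jt).
have := path_colour_pairs_far (esym (x_rep (ltnW jt))) (esym (x_rep jt)).
have [] := x_lazy (j:=j) ltac:(lia); have [] := second_half_lazy jt; lia.
Qed.

(* The matched pairs at i and m, with x_i next to x_m, fix the relative
   direction of the halves; a move breaking it would put two equal colours at
   distance 2 in one half. *)
Lemma move_sync i m : i < m -> m.+1 < t ->
  (x i).+1 = x m \/ (x m).+1 = x i -> x m.+1 <> x m ->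
  (x i + y m = x m + y i -> x m + y m.+1 = x m.+1 + y m) /\
  (x i + y i = x m + y m -> x m.+1 + y m.+1 = x m + y m).
Proof.
move=> im mt adj moves.
have := path_colour_pairs_far (x_rep (ltn_trans im (ltnW mt))) (x_rep mt).
have := path_colour_pairs_far (esym (x_rep (ltn_trans im (ltnW mt)))) (esym (x_rep mt)).
have [] := x_lazy (j:=m) ltac:(lia); have [] := second_half_lazy mt; have := stay_sync mt; lia.
Qed.

Definition halves_still m := forall j, j <= m -> x j = x 0 /\ y j = y 0.
Definition halves_parallel m := forall j, j <= m -> x j + y 0 = x 0 + y j.
Definition halves_mirrored m := forall j, j <= m -> x j + y j = x 0 + y 0.
Definition halves_moved m := exists2 i, i < m & (x i).+1 = x m \/ (x m).+1 = x i.

Lemma halves_sync m : m < t ->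
  halves_still m \/ (halves_parallel m /\ halves_moved m) \/ (halves_mirrored m /\ halves_moved m).
Proof.
elim: m => [|m IH] mt; first by left => j; rewrite leqn0 => /eqP ->.
have [xs1 xs2] := x_lazy (j:=m) ltac:(lia); have [ys1 ys2] := second_half_lazy mt.
have stay := stay_sync mt.
case: (x m.+1 =P x m) => [stays | moves].
  case: (IH (ltnW mt)) => [st | [[par [i im adj]] | [mir [i im adj]]]].
  - by left; apply: (forall_leqS st); have := st m (leqnn m); lia.
  - by right; left; split; [apply: (forall_leqS par); have := par m (leqnn m) | exists i]; lia.
  - by right; right; split; [apply: (forall_leqS mir); have := mir m (leqnn m) | exists i]; lia.
case: (IH (ltnW mt)) => [st | [[par [i im adj]] | [mir [i im adj]]]].
- have [] := st m (leqnn m); have [same | opposite] :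
    x m + y m.+1 = x m.+1 + y m \/ x m.+1 + y m.+1 = x m + y m by lia.
  + right; left; split; last by exists m; lia.
    by apply: forall_leqS => [j /st|]; lia.
  + right; right; split; last by exists m; lia.
    by apply: forall_leqS => [j /st|]; lia.
- have [par_i par_m] := (par i (ltnW im), par m (leqnn m)).
  have [keep _] := move_sync im mt adj moves.
  right; left; split; last by exists m; lia.
  by apply: (forall_leqS par); have := keep ltac:(lia); lia.
- have [mir_i mir_m] := (mir i (ltnW im), mir m (leqnn m)).
  have [_ keep] := move_sync im mt adj moves.
  right; right; split; last by exists m; lia.
  by apply: (forall_leqS mir); have := keep ltac:(lia); lia.
Qed.

Lemma repetitive_walk_not_rising : x 0 < y 0 -> False.
Proof.
move=> rising.
have t_gt0 : 0 < t by rewrite lt0n; apply/eqP => t0; move: rising; rewrite t0 addn0 ltnn.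
have y0 : y 0 = x t by rewrite add0n.
have mt : t.-1 < t by lia.
have [] : nat_lazy_step (x t.-1) (x t.-1.+1) by apply: x_lazy; lia.
rewrite prednK // => back_x fwd_x.
have [_ [gap _]] := gap_sign mt.
have := gap rising.
case: (halves_sync mt) => [st | [[par _] | [mir _]]].
- by have := st t.-1 (leqnn _); lia.
- move=> _; apply: (@path_colour_squarefree (y 0 - x 0) (x 0)); first lia.
  move=> r rL.
  have [k km xk] : exists2 k, k <= t.-1 & x k = x 0 + r.
    apply: lazy_walk_attains; last lia.
    by move=> j jt; have [] := x_lazy (j:=j) ltac:(lia).
  rewrite -xk x_rep; last lia.
  by congr path_colour; have := par k km; lia.
- by have := mir t.-1 (leqnn _); lia.
Qed.

End RepetitiveWalk.

Lemma nat_lazy_step_sym a b : nat_lazy_step a b -> nat_lazy_step b a.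
Proof. by case. Qed.

Theorem path_colour_repetitive_walk (x : nat -> nat) t :
  (forall j, j.+1 < t + t -> nat_lazy_step (x j) (x j.+1)) ->
  (forall j, j < t -> path_colour (x j) = path_colour (x (j + t))) ->
  forall j, j < t -> x j = x (j + t).
Proof.
move=> x_lazy x_rep j jt.
case: (ltngtP (x 0) (x (0 + t))) => [rising | falling | flat].
- by case: (repetitive_walk_not_rising x_lazy x_rep rising).
- (* Reversing the walk turns a falling gap into a rising one. *)
  pose z i := x (t + t - i.+1).
  have z_lazy i : i.+1 < t + t -> nat_lazy_step (z i) (z i.+1).
    move=> it; apply: nat_lazy_step_sym; rewrite /z.
    have -> : t + t - i.+1 = (t + t - i.+2).+1 by lia.
    by apply: x_lazy; lia.
  have z_rep i : i < t -> path_colour (z i) = path_colour (z (i + t)).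
    move=> it; rewrite /z.
    have -> : t + t - i.+1 = t - i.+1 + t by lia.
    have -> : t + t - (i + t).+1 = t - i.+1 by lia.
    by rewrite [RHS]x_rep //; lia.
  exfalso; apply: (repetitive_walk_not_rising z_lazy z_rep).
  have [_ [_ gap]] := gap_sign x_lazy x_rep (j := t.-1) ltac:(lia).
  rewrite /z add0n.
  have -> : t + t - t.+1 = t.-1 by lia.
  have -> : t + t - 1 = t.-1 + t by lia.
  by have := gap falling; lia.
- by have [+ _] := gap_sign x_lazy x_rep jt; apply.
Qed.

Lemma lazy_adj_strong_prod (A B : finType) (eA : rel A) (eB : rel B) u v :
  lazy_adj (strong_prod eA eB) u v -> lazy_adj eA u.1 v.1 /\ lazy_adj eB u.2 v.2.
Proof.
by rewrite /lazy_adj /strong_prod => /orP [/eqP -> | /andP [/andP [_ ->] ->]];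
   rewrite ?eqxx ?orbT.
Qed.

Lemma lazy_adj_path_graph n (a b : 'I_n) :
  lazy_adj (path_graph n) a b -> nat_lazy_step a b.
Proof.
by rewrite /lazy_adj /path_graph /nat_lazy_step; case/orP => [/eqP -> | /orP [] /eqP]; lia.
Qed.

Definition boring_repetitions (T : finType) (e : rel T) (C : Type) (psi : T -> C) : Prop :=
  forall w t, lazy_walk e w (t + t) -> (forall i, i < t -> psi (w i) = psi (w (i + t))) ->
  forall i, i < t -> w i = w (i + t).

Lemma strongly_nonrepetitive_strong_prod (A B : finType) (eA : rel A) (eB : rel B)
    (C D : Type) (phi : A -> C) (psi : B -> D) :
  strongly_nonrepetitive eA phi -> boring_repetitions eB psi ->
  strongly_nonrepetitive (strong_prod eA eB) (fun v => (phi v.1, psi v.2)).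
Proof.
move=> phi_sn psi_boring w t t_gt0 walk rep.
have [walkA walkB] :
    lazy_walk eA (fun j => (w j).1) (t + t) /\ lazy_walk eB (fun j => (w j).2) (t + t).
  by split=> j jt; have [] := lazy_adj_strong_prod (walk j jt).
have [i it eq1] := phi_sn _ t t_gt0 walkA (fun i it => congr1 fst (rep i it)).
exists i => //; apply: injective_projections => //=.
exact: psi_boring walkB (fun i it => congr1 snd (rep i it)) i it.
Qed.

Definition path_colouring n (v : 'I_n) : 'I_4 := Ordinal (path_colour_lt4 v).

Lemma path_colouring_boring n : boring_repetitions (path_graph n) (@path_colouring n).
Proof.
move=> w t walk rep i it; apply: val_inj.
apply: (path_colour_repetitive_walk (x := fun j => val (w j))) => // j jt.
  exact: lazy_adj_path_graph (walk j jt).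
exact: (congr1 val (rep j jt)).
Qed.

Lemma sn_colourable_card (T C : finType) (e : rel T) (chi : T -> C) :
  strongly_nonrepetitive e chi -> sn_colourable e #|C|.
Proof.
move=> chi_sn; exists (fun v => enum_rank (chi v)) => w t t_gt0 walk rep.
by apply: chi_sn => // i it; apply: enum_rank_inj; exact: rep.
Qed.

Theorem mainTheorem7 (T : finType) (e : rel T) (n : nat) (kG kGP : nat) :
  simple_graph e ->
  is_pi_star e kG ->
  is_pi_star (strong_prod e (path_graph n)) kGP ->
  kGP <= 4 * kG.
Proof.
move=> _ [[phi phi_sn] _] [_ kGP_min].
have := strongly_nonrepetitive_strong_prod phi_sn (@path_colouring_boring n).
by move/sn_colourable_card; rewrite card_prod !card_ord mulnC; apply: kGP_min.
Qed.
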